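(* For every $n\ge 1$, the optimal value $E(n)$ of the linear program $$\text{minimize } \sum_{u\in\mathbb{F}_2^n}x_u \quad\text{subject to}\quad 0\le x_u\le 1\ (u\in\mathbb{F}_2^n),\qquad x_v+\sum_{\substack{u\in\mathbb{F}_2^n,\ u\supset v\\ \mathrm{dist}(u,v)=1}}x_u\ \ge\ 1\ \ \text{for all } v\in\mathbb{F}_2^n,$$ is $$E(n)=(-1)^n\,n!\,\{R_n(2)-R_n(1)R_{n-1}(1)\},\qquad\text{where } R_n(x)=\sum_{k=0}^n\frac{(-x)^k}{k!}.$$
   Context: Subsets of an $n$-set are identified with their indicator vectors in $\mathbb{F}_2^n$; $u\supset v$ means the support of $u$ contains the support of $v$, and dist denotes Hamming distance. $R_n(x)$ is the degree-$n$ partial sum of the Taylor series of $e^{-x}$. *)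

(* Subsets of an n-set = elements of F_2^n via indicator vectors;
   we represent them as {set 'I_n}. *)
From mathcomp Require Import all_boot all_order all_algebra.
Set Implicit Arguments. Unset Strict Implicit. Unset Printing Implicit Defensive.
Import Order.TTheory GRing.Theory Num.Theory.
Local Open Scope ring_scope.

Definition hdist (n : nat) (u v : {set 'I_n}) : nat :=
  #|(u :\: v) :|: (v :\: u)|.

Definition lp_feasible (R : realFieldType) (n : nat) (x : {set 'I_n} -> R) : Prop :=
  (forall u, 0 <= x u <= 1) /\
  (forall v : {set 'I_n},
     1 <= x v + \sum_(u : {set 'I_n} | (v \subset u) && (hdist u v == 1%N)) x u).

Definition lp_objective (R : realFieldType) (n : nat) (x : {set 'I_n} -> R) : R :=
  \sum_(u : {set 'I_n}) x u.

Definition Rtaylor (R : realFieldType) (n : nat) (x : R) : R :=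
  \sum_(k < n.+1) (- x) ^+ k / (k`!)%:R.

Definition Evalue (R : realFieldType) (n : nat) : R :=
  (-1) ^+ n * (n`!)%:R * (Rtaylor n 2 - Rtaylor n 1 * Rtaylor n.-1 1).

From mathcomp Require Import all_boot all_order all_algebra.
From mathcomp Require Import ring.
Set Implicit Arguments. Unset Strict Implicit. Unset Printing Implicit Defensive.
Import Order.TTheory GRing.Theory Num.Theory.
Local Open Scope ring_scope.

(* LP duality with certificates that depend only on cardinalities.  The dual
   weights a_k = (-1)^k k! (R_k(1) - R_(n-1)(1)), put on every set of size k,
   satisfy a_(k+1) + (k+1) a_k = 1, a_(n-1) = 0 and 0 <= a_k <= 1; weighting the
   covering constraints by them and double counting shows sum_v a_|v| <= sum_u x_u
   for every feasible x.  The primal point x_u = y_|u|, with y_0 = 0,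
   y_(k+1) = (1 - y_k) / (n - k) and y_n = 1, makes every constraint tight except
   on the layer of size n - 1, where a vanishes, so it attains the same value.
   Finally sum_k C(n,k) a_k = E(n) by the Cauchy product of truncated
   exponentials, sum_(j <= n) (-x)^j / j! R_(n-j)(y) = R_n(x + y). *)

Section Covers.
Variable n : nat.
Implicit Types u v : {set 'I_n}.

Definition covers u v := (v \subset u) && (hdist u v == 1%N).

Lemma card_set_leq v : (#|v| <= n)%N.
Proof. by rewrite -[leqRHS](card_ord n) max_card. Qed.

Lemma hdist_subset u v : v \subset u -> hdist u v = #|u :\: v|.
Proof.
move=> svu; rewrite /hdist; have /eqP -> : v :\: u == set0 by rewrite setD_eq0.
by rewrite setU0.
Qed.

Lemma coversP u v : reflect (exists2 i, i \notin v & u = i |: v) (covers u v).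
Proof.
rewrite /covers; apply: (iffP andP) => [[svu]|[i iv ->]].
  rewrite hdist_subset // => /cards1P [i Di].
  have : i \in u :\: v by rewrite Di set11.
  rewrite inE => /andP [iv _]; exists i => //.
  by rewrite -Di setUC -{1}(setID u v) (setIidPr svu).
split; first exact: subsetUr.
rewrite hdist_subset ?subsetUr // setDUl setDv setU0.
suff -> : [set i] :\: v = [set i] by rewrite cards1.
by apply/setP => j; rewrite !inE andbC; case: eqP => // ->.
Qed.

Lemma lower_coversP u v : reflect (exists2 i, i \in u & v = u :\ i) (covers u v).
Proof.
apply: (iffP (coversP u v)) => [[i iv ->]|[i iu ->]].
  by exists i; rewrite ?setU11 ?setU1K.
by exists i; rewrite ?setD11 ?setD1K.
Qed.

End Covers.

Section CoverSums.
Variables (R : realFieldType) (n : nat).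
Implicit Types (u v : {set 'I_n}) (f : nat -> R).

Definition cover_sum (x : {set 'I_n} -> R) v := x v + \sum_(u | covers u v) x u.

Lemma sum_upper_covers v (F : {set 'I_n} -> R) :
  \sum_(u | covers u v) F u = \sum_(i in ~: v) F (i |: v).
Proof.
rewrite (eq_bigl [in [set i |: v | i in ~: v]]) => [|u /=].
  rewrite big_imset // => i j; rewrite !inE => iv _ /setP /(_ i).
  by rewrite !inE eqxx orTb (negbTE iv) orbF => /esym/eqP.
by apply/coversP/imsetP => -[i iv ->]; exists i; rewrite ?inE in iv *.
Qed.

Lemma sum_lower_covers u (F : {set 'I_n} -> R) :
  \sum_(v | covers u v) F v = \sum_(i in u) F (u :\ i).
Proof.
rewrite (eq_bigl [in [set u :\ i | i in u]]) => [|v].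
  rewrite big_imset // => i j iu _ /setP /(_ i).
  by rewrite !inE eqxx iu andbT; case: eqP.
by apply/lower_coversP/imsetP.
Qed.

Lemma sum_upper_covers_card v f :
  \sum_(u | covers u v) f #|u| = (n - #|v|)%:R * f #|v|.+1.
Proof.
rewrite sum_upper_covers (eq_bigr (fun=> f #|v|.+1)) => [|i]; last first.
  by rewrite inE cardsU1 => ->.
rewrite sumr_const mulr_natl; congr (_ *+ _).
by move/(congr1 (subn^~ #|v|)): (cardsC v); rewrite addKn card_ord.
Qed.

Lemma sum_lower_covers_card u f :
  \sum_(v | covers u v) f #|v| = #|u|%:R * f #|u|.-1.
Proof.
rewrite sum_lower_covers (eq_bigr (fun=> f #|u|.-1)) => [|i iu].
  by rewrite sumr_const mulr_natl.
by rewrite (cardsD1 i u) iu.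
Qed.

Lemma sum_set_card f :
  \sum_(v : {set 'I_n}) f #|v| = \sum_(k < n.+1) 'C(n, k)%:R * f k.
Proof.
rewrite (partition_big (fun v : {set 'I_n} => inord #|v| : 'I_n.+1) xpredT) //=.
apply: eq_bigr => k _.
rewrite (eq_bigl [in [set v : {set 'I_n} | #|v| == k]]) => [|v]; last first.
  by rewrite inE -(inj_eq val_inj) /= inordK // ltnS card_set_leq.
rewrite (eq_bigr (fun=> f k)) => [|v]; last by rewrite inE => /eqP ->.
by rewrite sumr_const card_draws card_ord mulr_natl.
Qed.

Lemma sum_weighted_cover_sum (w x : {set 'I_n} -> R) :
  \sum_(v : {set 'I_n}) w v * cover_sum x v =
  \sum_(u : {set 'I_n}) x u * (w u + \sum_(v | covers u v) w v).
Proof.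
under eq_bigr do rewrite mulrDr mulr_sumr big_mkcond.
rewrite big_split /= exchange_big -big_split /=.
apply: eq_bigr => u _; rewrite mulrDr mulr_sumr [in RHS]big_mkcond mulrC.
by congr (_ + _); apply: eq_bigr => v _; case: ifP; rewrite ?mulr0 // mulrC.
Qed.

End CoverSums.

Section TaylorSums.
Variable R : realFieldType.
Implicit Types x y : R.

Definition taylor_term x k : R := (- x) ^+ k / (k`!)%:R.

Lemma fact_neq0 k : (k`!)%:R != 0 :> R.
Proof. by rewrite pnatr_eq0 -lt0n fact_gt0. Qed.

Lemma RtaylorS n x : Rtaylor n.+1 x = Rtaylor n x + taylor_term x n.+1.
Proof. by rewrite /Rtaylor big_ord_recr. Qed.

Lemma Rtaylor0 x : Rtaylor 0 x = 1.
Proof. by rewrite /Rtaylor big_ord1 expr0 fact0 divr1. Qed.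

Lemma taylor_term0 x : taylor_term x 0 = 1.
Proof. by rewrite /taylor_term expr0 fact0 divr1. Qed.

Lemma taylor_term_conv x y m :
  \sum_(j < m.+1) taylor_term x j * taylor_term y (m - j) = taylor_term (x + y) m.
Proof.
rewrite /taylor_term opprD addrC exprDn mulr_suml; apply: eq_bigr => j _.
have le_jm : (j <= m)%N by rewrite -ltnS.
rewrite -(bin_fact le_jm) !natrM -mulr_natr.
have := fact_neq0 j; have := fact_neq0 (m - j); have : 'C(m, j)%:R != 0 :> R.
  by rewrite pnatr_eq0 -lt0n bin_gt0.
by move=> h1 h2 h3; field; rewrite h1 h2 h3.
Qed.

Lemma Rtaylor_conv x y n :
  \sum_(j < n.+1) taylor_term x j * Rtaylor (n - j) y = Rtaylor n (x + y).
Proof.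
elim: n => [|n IHn]; first by rewrite big_ord1 taylor_term0 !Rtaylor0 mulr1.
rewrite big_ord_recr /= subnn Rtaylor0 mulr1 RtaylorS -IHn -taylor_term_conv.
rewrite [\sum_(j < n.+2) _]big_ord_recr /= subnn taylor_term0 mulr1 addrA.
congr (_ + _).
rewrite -big_split /=; apply: eq_bigr => j _.
by rewrite subSn -1?ltnS // RtaylorS mulrDr.
Qed.

End TaylorSums.

Lemma one_sub_div_itv (R : realFieldType) (b d : R) :
  0 <= b <= 1 -> 1 <= d -> 0 <= (1 - b) / d <= 1.
Proof.
move=> /andP [b_ge0 b_le1] d_ge1; have d_gt0 : 0 < d by exact: lt_le_trans d_ge1.
apply/andP; split; first by apply: divr_ge0; [rewrite subr_ge0 | exact: ltW].
by rewrite ler_pdivrMr // mul1r; apply: le_trans d_ge1; rewrite gerBl.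
Qed.

Lemma sign_mulrr (R : pzRingType) k : (-1) ^+ k * (-1) ^+ k = 1 :> R.
Proof. by rewrite -exprD -signr_odd addnn odd_double. Qed.

Section DualWeights.
Variables (R : realFieldType) (m : nat).

Definition dual_weight k : R := (-1) ^+ k * (k`!)%:R * (Rtaylor k 1 - Rtaylor m 1).

Lemma dual_weightS k : dual_weight k.+1 + k.+1%:R * dual_weight k = 1.
Proof.
rewrite /dual_weight RtaylorS /taylor_term factS natrM exprS -[RHS](sign_mulrr R k).
have := fact_neq0 R k; have : 1 + k%:R != 0 :> R by rewrite addrC natr1 pnatr_eq0.
by move=> h1 h2; field; rewrite h1 h2.
Qed.

Lemma dual_weight_diag : dual_weight m = 0.
Proof. by rewrite /dual_weight subrr mulr0. Qed.

Lemma dual_weight_rec k : dual_weight k = (1 - dual_weight k.+1) / k.+1%:R.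
Proof.
have nz : k.+1%:R != 0 :> R by rewrite pnatr_eq0.
by rewrite -[X in X - _](dual_weightS k) addrC addKr mulrC mulKf.
Qed.

Lemma dual_weight_itv k : (k <= m.+1)%N -> 0 <= dual_weight k <= 1.
Proof.
suff below i : (i <= m)%N -> 0 <= dual_weight (m - i) <= 1.
  rewrite leq_eqVlt ltnS => /predU1P [->|le_km]; last first.
    by rewrite -(subKn le_km) below ?leq_subr.
  have := dual_weightS m; rewrite dual_weight_diag mulr0 addr0 => ->.
  by rewrite ler01 lexx.
elim: i => [|i IHi] le_im; first by rewrite subn0 dual_weight_diag lexx ler01.
rewrite dual_weight_rec subnSK //; apply: one_sub_div_itv; first exact: IHi (ltnW le_im).
by rewrite ler1n subn_gt0.
Qed.

Lemma dual_load_le1 k :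
  (k <= m.+1)%N -> dual_weight k + k%:R * dual_weight k.-1 <= 1.
Proof.
case: k => [|k] le_km; last by rewrite dual_weightS.
by rewrite mul0r addr0; case/andP: (dual_weight_itv le_km).
Qed.

Lemma sum_binomial_dual_weight :
  \sum_(k < m.+2) 'C(m.+1, k)%:R * dual_weight k = Evalue R m.+1.
Proof.
rewrite (eq_bigr (fun k : 'I_m.+2 => (m.+1)`!%:R *
    ((-1) ^+ k / ((m.+1 - k)`!)%:R * (Rtaylor k 1 - Rtaylor m 1)))) => [|k _].
  rewrite -mulr_sumr (reindex_inj rev_ord_inj) /=.
  rewrite (eq_bigr (fun j : 'I_m.+2 => (-1) ^+ m.+1 *
      (taylor_term 1 j * (Rtaylor (m.+1 - j) 1 - Rtaylor m 1)))) => [|j _].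
    rewrite -mulr_sumr (eq_bigr _ (fun j _ => mulrBr _ _ _)) sumrB -mulr_suml.
    rewrite Rtaylor_conv.
    have -> : \sum_(j < m.+2) taylor_term 1 j = Rtaylor m.+1 1 :> R by [].
    by rewrite /Evalue /=; ring.
  have le_jm : (j <= m.+1)%N by rewrite -ltnS.
  rewrite subSS subKn // /taylor_term -signr_odd oddB // signr_addb !signr_odd.
  by rewrite !mulrA.
have le_km : (k <= m.+1)%N by rewrite -ltnS.
rewrite /dual_weight -(bin_fact le_km) !natrM.
by have := fact_neq0 R (m.+1 - k) => h; field.
Qed.

End DualWeights.

Section PrimalWeights.
Variables (R : realFieldType) (n : nat).

Fixpoint primal_chain k : R :=
  if k is k.+1 then (1 - primal_chain k) / (n - k)%:R else 0.

Definition primal_weight k : R := if k == n then 1 else primal_chain k.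

Lemma primal_chainS k :
  (k < n)%N -> primal_chain k + (n - k)%:R * primal_chain k.+1 = 1.
Proof.
move=> lt_kn /=; rewrite mulrC divfK; first by rewrite addrC subrK.
by rewrite pnatr_eq0 -lt0n subn_gt0.
Qed.

Lemma primal_chain_itv k : (k <= n)%N -> 0 <= primal_chain k <= 1.
Proof.
elim: k => [|k IHk] le_kn /=; first by rewrite lexx ler01.
apply: one_sub_div_itv; first exact: IHk (ltnW le_kn).
by rewrite ler1n subn_gt0.
Qed.

Lemma primal_weight_itv k : (k <= n)%N -> 0 <= primal_weight k <= 1.
Proof.
by rewrite /primal_weight; case: eqP => _; [rewrite ler01 lexx | exact: primal_chain_itv].
Qed.

Lemma primal_weight_tight k :
  (k <= n)%N -> k.+1 != n -> primal_weight k + (n - k)%:R * primal_weight k.+1 = 1.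
Proof.
rewrite leq_eqVlt => /predU1P [->|lt_kn] ne_kn.
  by rewrite subnn mul0r addr0 /primal_weight eqxx.
by rewrite /primal_weight (negbTE ne_kn) (ltn_eqF lt_kn) primal_chainS.
Qed.

Lemma primal_weight_cover k :
  (k <= n)%N -> 1 <= primal_weight k + (n - k)%:R * primal_weight k.+1.
Proof.
case: (eqVneq k.+1 n) => [Sk_n|ne_kn] le_kn; last by rewrite primal_weight_tight.
rewrite -Sk_n subSnn mul1r {2}/primal_weight Sk_n eqxx lerDr.
by case/andP: (primal_weight_itv le_kn).
Qed.

Lemma primal_feasible : lp_feasible (fun u : {set 'I_n} => primal_weight #|u|).
Proof.
split=> [u|v]; first exact/primal_weight_itv/card_set_leq.
by rewrite sum_upper_covers_card; apply/primal_weight_cover/card_set_leq.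
Qed.

End PrimalWeights.

Section Duality.
Variables (R : realFieldType) (m : nat).
Implicit Types x : {set 'I_m.+1} -> R.

Lemma sum_dual_weight_cover_sum x :
  \sum_(v : {set 'I_m.+1}) dual_weight R m #|v| * cover_sum x v =
  \sum_(u : {set 'I_m.+1}) x u * (dual_weight R m #|u| + #|u|%:R * dual_weight R m #|u|.-1).
Proof. by rewrite sum_weighted_cover_sum; under eq_bigr do rewrite sum_lower_covers_card. Qed.

Lemma sum_dual_weight :
  \sum_(v : {set 'I_m.+1}) dual_weight R m #|v| = Evalue R m.+1.
Proof. by rewrite sum_set_card sum_binomial_dual_weight. Qed.

Lemma weak_duality x :
  lp_feasible x -> \sum_(v : {set 'I_m.+1}) dual_weight R m #|v| <= lp_objective x.
Proof.
move=> [x_itv x_cover].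
apply: (le_trans (y := \sum_(v : {set 'I_m.+1}) dual_weight R m #|v| * cover_sum x v)).
  apply: ler_sum => v _; rewrite -{1}[dual_weight _ _ _]mulr1.
  by apply: ler_wpM2l; [case/andP: (dual_weight_itv R (card_set_leq v)) | exact: x_cover].
rewrite sum_dual_weight_cover_sum; apply: ler_sum => u _.
rewrite -{2}[x u]mulr1; apply: ler_wpM2l; first by case/andP: (x_itv u).
exact/dual_load_le1/card_set_leq.
Qed.

Let x_opt (u : {set 'I_m.+1}) : R := primal_weight R m.+1 #|u|.

Lemma complementary_slackness (v : {set 'I_m.+1}) :
  dual_weight R m #|v| * cover_sum x_opt v = dual_weight R m #|v|.
Proof.
rewrite /cover_sum sum_upper_covers_card.
case: (eqVneq #|v|.+1 m.+1) => [[->]|ne]; first by rewrite dual_weight_diag !mul0r.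
by rewrite primal_weight_tight ?mulr1 ?card_set_leq.
Qed.

Lemma primal_objective :
  lp_objective x_opt = \sum_(v : {set 'I_m.+1}) dual_weight R m #|v|.
Proof.
under [RHS]eq_bigr do rewrite -complementary_slackness.
rewrite sum_dual_weight_cover_sum; apply: eq_bigr => u _.
rewrite /x_opt; case: #|u| => [|k]; last by rewrite dual_weightS mulr1.
by rewrite /primal_weight /= mul0r.
Qed.

End Duality.

Theorem theorem2 (R : realFieldType) (n : nat) (hn : (1 <= n)%N) :
  (exists x : {set 'I_n} -> R, lp_feasible x /\ lp_objective x = Evalue R n) /\
  (forall x : {set 'I_n} -> R, lp_feasible x -> Evalue R n <= lp_objective x).
Proof.
case: n hn => [//|m] _; rewrite -sum_dual_weight.
split; last exact: weak_duality.
exists (fun u : {set 'I_m.+1} => primal_weight R m.+1 #|u|).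
by split; [exact: primal_feasible | exact: primal_objective].
Qed.
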